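(* Let $\mathcal F_{\mathbb I}$ be the set of structure functions of the weakly flattened unit interval $\mathbb I$. Then $$\mathcal F_{\mathbb I}=\Big\{f\in\mathcal F_I \;:\; \lim_{t\to0^+}\tfrac{d^n}{dt^n}f(t)=0 \text{ and } \lim_{t\to1^-}\tfrac{d^n}{dt^n}f(t)=0 \text{ for all } n\ge1\Big\}.$$ That is, the generating set of $\mathbb I$ is already the full set of its structure functions, and every structure function on $\mathbb I$ has all derivatives of order $\ge1$ tending to $0$ at both endpoints.
   Context: A Frölicher space is a triple $(X,\mathcal C_X,\mathcal F_X)$ with $\mathcal C_X\subseteq X^{\mathbb R}$ and $\mathcal F_X\subseteq\mathbb R^X$ such that $\mathcal F_X=\{f:X\to\mathbb R\mid f\circ c\in C^\infty(\mathbb R,\mathbb R)\ \forall c\in\mathcal C_X\}$ and $\mathcal C_X=\{c:\mathbb R\to X\mid f\circ c\in C^\infty(\mathbb R,\mathbb R)\ \forall f\in\mathcal F_X\}$. Elements of $\mathcal C_X$ are called structure curves and elements of $\mathcal F_X$ structure functions. The structure generated by a set $F_0\subseteq\mathbb R^X$ has $\mathcal C_X=\{c\mid f\circ c\in C^\infty\ \forall f\in F_0\}$ and $\mathcal F_X=\{f\mid f\circ c\in C^\infty\ \forall c\in\mathcal C_X\}$. The space $I$ is $[0,1]$ with the subspace structure from $\mathbb R$: its structure curves are the maps $\mathbb R\to[0,1]$ that are $C^\infty$ as real-valued functions, and $\mathcal F_I$ is the corresponding set of structure functions. The weakly flattened unit interval $\mathbb I$ is the set $[0,1]$ with the structure generated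 by $F=\{f\in\mathcal F_I\mid \lim_{t\to0^+}f^{(n)}(t)=0=\lim_{t\to1^-}f^{(n)}(t)\ \forall n\ge1\}$. *)

From Stdlib Require Import Reals.
Open Scope R_scope.

Definition smooth (g : R -> R) : Prop :=
  exists d : nat -> R -> R,
    (forall x, d 0%nat x = g x) /\
    (forall n x, derivable_pt_lim (d n) x (d (S n) x)).

Definition I01 : Type := { x : R | 0 <= x <= 1 }.

(** Structure curves of I (subspace structure from R). *)
Definition curve_I (c : R -> I01) : Prop :=
  smooth (fun t => proj1_sig (c t)).

Definition F_I (f : I01 -> R) : Prop :=
  forall c : R -> I01, curve_I c -> smooth (fun t => f (c t)).

Definition ext (f : I01 -> R) (x : R) : R :=
  match Rle_dec 0 x, Rle_dec x 1 with
  | left h0, left h1 => f (exist _ x (conj h0 h1))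
  | right _, _ => f (exist _ 0 (conj (Rle_refl 0) Rle_0_1))
  | left _, right _ => f (exist _ 1 (conj Rle_0_1 (Rle_refl 1)))
  end.

Definition open01 (t : R) : Prop := 0 < t < 1.

(** f's derivatives of every order n >= 1 on the open interval (0,1)
    tend to 0 as t -> 0+ and t -> 1-.  The family d is the family of
    derivatives of f on (0,1) (unique there). *)
Definition flat_ends (f : I01 -> R) : Prop :=
  exists d : nat -> R -> R,
    (forall t, open01 t -> d 0%nat t = ext f t) /\
    (forall n t, open01 t -> derivable_pt_lim (d n) t (d (S n) t)) /\
    (forall n, (1 <= n)%nat ->
       limit1_in (d n) open01 0 0 /\ limit1_in (d n) open01 0 1).

Definition F_gen (f : I01 -> R) : Prop := F_I f /\ flat_ends f.

Definition curve_II (c : R -> I01) : Prop :=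
  forall g, F_gen g -> smooth (fun t => g (c t)).

Definition F_II (f : I01 -> R) : Prop :=
  forall c, curve_II c -> smooth (fun t => f (c t)).

(** The inclusion F ⊆ F_II is
    immediate, so the content is F_II ⊆ F.  Since F ⊆ F_I, every curve of I
    is a curve of II, whence F_II ⊆ F_I.  For flatness the key observation is
    that the clamping map cl : R -> [0,1] is a curve of II: for g ∈ F, the
    function ext g = g ∘ cl is smooth on R, its derivatives being the
    derivatives of g on (0,1) extended by 0.  At the endpoints this uses
    (i) continuity of ext g there, obtained from the curve (1 - cos t)/2 of I,
    and (ii) the fact that a function continuous at a point whose derivative
    tends to 0 there is differentiable with derivative 0 (mean value theorem).
    Consequently f ∈ F_II makes f ∘ cl = ext f smooth; its derivatives vanish
    off [0,1] where ext f is constant, so by continuity they tend to 0 at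
    both endpoints, i.e. f is flat at the ends. *)

From Stdlib Require Import Reals Lra ProofIrrelevance.
Open Scope R_scope.

Lemma continuity_pt_eps (F : R -> R) a : continuity_pt F a ->
  forall eps, 0 < eps ->
  exists eta, 0 < eta /\ forall x, Rabs (x - a) < eta -> Rabs (F x - F a) < eps.
Proof.
  intros HF eps Heps. destruct (HF eps Heps) as [eta [Heta Hx]].
  exists eta. split; [lra|]. intros x Hxa.
  destruct (Req_dec x a) as [->|Hne].
  - rewrite Rminus_diag, Rabs_R0; lra.
  - apply (Hx x). split; [split; [exact I|auto]|exact Hxa].
Qed.

Lemma derivable_pt_lim_continuity F x l :
  derivable_pt_lim F x l -> continuity_pt F x.
Proof. intros H. apply derivable_continuous_pt. exists l. exact H. Qed.

Lemma smooth_continuity_pt g a : smooth g -> continuity_pt g a.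
Proof.
  intros [d [Hd0 Hd]]. apply (continuity_pt_locally_ext (d 0%nat) g 1 a); [lra| |].
  - intros y _. apply Hd0.
  - exact (derivable_pt_lim_continuity _ _ _ (Hd 0%nat a)).
Qed.

Lemma derivative_of_locally_constant (F : R -> R) a b k x l :
  (forall y, a < y < b -> F y = k) -> a < x < b ->
  derivable_pt_lim F x l -> l = 0.
Proof.
  intros Hk Hx HF. apply (uniqueness_limite F x); [exact HF|].
  apply (derivable_pt_lim_locally_ext (fct_cte k) F x a b 0 Hx).
  - intros y Hy. symmetry. apply Hk, Hy.
  - apply derivable_pt_lim_const.
Qed.

Lemma mean_value_bound F F' a b M : a < b ->
  continuity_pt F a -> continuity_pt F b ->
  (forall x, a < x < b -> derivable_pt_lim F x (F' x)) ->
  (forall x, a < x < b -> Rabs (F' x) <= M) ->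
  Rabs (F b - F a) <= M * (b - a).
Proof.
  intros Hab Ca Cb HD HM.
  assert (prF : forall c, a < c < b -> derivable_pt F c)
    by (intros c Hc; exists (F' c); apply HD, Hc).
  assert (prid : forall c, a < c < b -> derivable_pt id c)
    by (intros c _; exists 1; apply derivable_pt_lim_id).
  destruct (MVT F id a b prF prid Hab) as [c [Pc Hc]].
  - intros c [H1 H2].
    destruct (Rle_lt_or_eq_dec _ _ H1) as [H1'|<-]; [|exact Ca].
    destruct (Rle_lt_or_eq_dec _ _ H2) as [H2'| ->]; [|exact Cb].
    apply (derivable_pt_lim_continuity F c (F' c)), HD; lra.
  - intros c _. apply derivable_continuous_pt, derivable_pt_id.
  - rewrite (derive_pt_eq_0 F c (F' c) (prF c Pc) (HD c Pc)),
      (derive_pt_eq_0 id c 1 (prid c Pc) (derivable_pt_lim_id c)) in Hc.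
    unfold id in Hc. rewrite Rmult_1_r in Hc. rewrite <- Hc, Rabs_mult,
      (Rabs_right (b - a)), Rmult_comm by lra.
    apply Rmult_le_compat_r; [lra|]. apply HM, Pc.
Qed.

Lemma increment_bound F F' a d M h :
  continuity_pt F a ->
  (forall x, 0 < Rabs (x - a) < d -> derivable_pt_lim F x (F' x)) ->
  (forall x, 0 < Rabs (x - a) < d -> Rabs (F' x) <= M) ->
  Rabs h < d -> Rabs (F (a + h) - F a) <= M * Rabs h.
Proof.
  intros Ca HD HM Hh.
  assert (Hd : forall x, 0 < Rabs (x - a) < d -> continuity_pt F x)
    by (intros x Hx; exact (derivable_pt_lim_continuity _ _ _ (HD x Hx))).
  assert (Ch : h <> 0 -> continuity_pt F (a + h))
    by (intros Hh0; apply Hd; replace (a + h - a) with h by ring;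
        split; [apply Rabs_pos_lt|]; assumption).
  destruct (Rtotal_order h 0) as [Hneg|[->|Hpos]].
  - rewrite (Rabs_left h) in Hh |- * by lra. rewrite Rabs_minus_sym.
    replace (- h) with (a - (a + h)) by ring.
    apply (mean_value_bound F F'); try lra; [apply Ch; intro; lra|exact Ca| |];
      intros x Hx; [apply HD|apply HM]; rewrite Rabs_left; lra.
  - rewrite Rplus_0_r, Rminus_diag, !Rabs_R0. lra.
  - rewrite (Rabs_right h) in Hh |- * by lra.
    replace h with (a + h - a) at 2 by ring.
    apply (mean_value_bound F F'); try lra; [exact Ca|apply Ch; intro; lra| |];
      intros x Hx; [apply HD|apply HM]; rewrite Rabs_right; lra.
Qed.

Lemma flat_point_derivative F F' a d : 0 < d -> continuity_pt F a ->
  (forall x, 0 < Rabs (x - a) < d -> derivable_pt_lim F x (F' x)) ->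
  (forall eps, 0 < eps -> exists eta, 0 < eta /\
     forall x, 0 < Rabs (x - a) < eta -> Rabs (F' x) < eps) ->
  derivable_pt_lim F a 0.
Proof.
  intros Hd Ca HD HL eps Heps.
  destruct (HL (eps / 2)) as [eta [Heta Hsmall]]; [lra|].
  assert (Hm : 0 < Rmin eta d) by (apply Rmin_pos; lra).
  exists (mkposreal _ Hm). simpl. intros h Hh0 Hh.
  pose proof (Rmin_l eta d). pose proof (Rmin_r eta d).
  assert (Hb : Rabs (F (a + h) - F a) <= eps / 2 * Rabs h).
  { apply (increment_bound F F' a (Rmin eta d)); [exact Ca| | |exact Hh].
    - intros x Hx. apply HD. lra.
    - intros x Hx. left. apply Hsmall. lra. }
  assert (Hhp : 0 < Rabs h) by (apply Rabs_pos_lt, Hh0).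
  rewrite Rminus_0_r. unfold Rdiv. rewrite Rabs_mult, Rabs_inv.
  apply Rle_lt_trans with (eps / 2 * Rabs h * / Rabs h).
  - apply Rmult_le_compat_r; [left; apply Rinv_0_lt_compat, Hhp|exact Hb].
  - field_simplify; lra.
Qed.

Lemma limit_zero_of_zeros (F : R -> R) (Dom : R -> Prop) a : continuity_pt F a ->
  (forall eps, 0 < eps -> exists x, Rabs (x - a) < eps /\ F x = 0) ->
  limit1_in F Dom 0 a.
Proof.
  intros Hc Hz.
  assert (Fa : F a = 0).
  { destruct (Req_dec (F a) 0) as [E|E]; [exact E|exfalso].
    assert (Hp : 0 < Rabs (F a)) by (apply Rabs_pos_lt, E).
    destruct (continuity_pt_eps F a Hc _ Hp) as [eta [Heta Hx]].
    destruct (Hz eta Heta) as [x [Hxa Fx]]. specialize (Hx x Hxa).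
    rewrite Fx, Rminus_0_l, Rabs_Ropp in Hx. lra. }
  intros eps Heps. destruct (continuity_pt_eps F a Hc eps Heps) as [eta [Heta Hx]].
  exists eta. split; [lra|]. intros x [_ Hxa]. simpl in *. unfold R_dist in *.
  rewrite <- Fa. apply Hx, Hxa.
Qed.

Lemma derivatives_vanish (d : nat -> R -> R) a b k :
  (forall x, a < x < b -> d 0%nat x = k) ->
  (forall n x, derivable_pt_lim (d n) x (d (S n) x)) ->
  forall n x, a < x < b -> d (S n) x = 0.
Proof.
  intros Hk Hd.
  assert (Hconst : forall n, exists c, forall x, a < x < b -> d n x = c).
  { induction n as [|n [c Hc]]; [exists k; exact Hk|].
    exists 0. intros x Hx. exact (derivative_of_locally_constant _ a b c x _ Hc Hx (Hd n x)). }
  intros n x Hx. destruct (Hconst n) as [c Hc].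
  exact (derivative_of_locally_constant _ a b c x _ Hc Hx (Hd n x)).
Qed.

Lemma continuity_along_curve (F phi : R -> R) delta : 0 < delta ->
  continuity phi -> phi 0 = 0 -> (forall t, 0 < t < delta -> 0 < phi t) ->
  continuity_pt (fun t => F (phi t)) 0 ->
  (forall x, x <= 0 -> F x = F 0) ->
  continuity_pt F 0.
Proof.
  intros Hdelta Cphi Hphi0 Hpos CFphi Hleft eps Heps.
  destruct (continuity_pt_eps _ 0 CFphi eps Heps) as [eta [Heta Hx]].
  set (t0 := Rmin eta delta / 2).
  assert (Ht0 : 0 < t0 < eta /\ t0 < delta)
    by (pose proof (Rmin_l eta delta); pose proof (Rmin_r eta delta);
        pose proof (Rmin_pos eta delta Heta Hdelta); unfold t0; lra).
  assert (Hphit0 : 0 < phi t0) by (apply Hpos; lra).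
  exists (phi t0). split; [exact Hphit0|]. intros x [_ Hxa]. simpl in *.
  unfold R_dist in *. rewrite Rminus_0_r in Hxa.
  destruct (Rle_or_lt x 0) as [Hn|Hp].
  - rewrite (Hleft x Hn), Rminus_diag, Rabs_R0. lra.
  - rewrite Rabs_right in Hxa by lra.
    destruct (IVT (fun t => phi t - x) 0 t0) as [t [Ht Hphit]].
    + intros y. apply continuity_pt_minus; [apply Cphi|apply continuity_pt_const].
      intros u v; reflexivity.
    + lra.
    + lra.
    + lra.
    + replace x with (phi t) by lra. rewrite <- Hphi0.
      apply Hx. rewrite Rminus_0_r, Rabs_right; lra.
Qed.

(** * The extension [ext] and the clamping curve *)

Lemma ext_val (g : I01 -> R) x (h : 0 <= x <= 1) : ext g x = g (exist _ x h).
Proof.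
  unfold ext. destruct (Rle_dec 0 x) as [h0|h0], (Rle_dec x 1) as [h1|h1];
    try (exfalso; lra).
  rewrite (proof_irrelevance _ (conj h0 h1) h). reflexivity.
Qed.

Lemma ext_proj (g : I01 -> R) (y : I01) : g y = ext g (proj1_sig y).
Proof. destruct y as [x h]. simpl. symmetry. apply ext_val. Qed.

Lemma ext_left g x : x <= 0 -> ext g x = ext g 0.
Proof.
  intros H. rewrite (ext_val g 0 (conj (Rle_refl 0) Rle_0_1)).
  destruct (Rle_lt_or_eq_dec _ _ H) as [H'| ->]; [|apply ext_val].
  unfold ext. destruct (Rle_dec 0 x); [exfalso; lra|]. reflexivity.
Qed.

Lemma ext_right g x : 1 <= x -> ext g x = ext g 1.
Proof.
  intros H. rewrite (ext_val g 1 (conj Rle_0_1 (Rle_refl 1))).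
  destruct (Rle_lt_or_eq_dec _ _ H) as [H'|<-]; [|apply ext_val].
  unfold ext. destruct (Rle_dec 0 x); [|exfalso; lra].
  destruct (Rle_dec x 1); [exfalso; lra|reflexivity].
Qed.

Definition clampR (t : R) : R := Rmax 0 (Rmin t 1).

Lemma clampR_in t : 0 <= clampR t <= 1.
Proof. unfold clampR. split; [apply Rmax_l|]. apply Rmax_lub; [lra|apply Rmin_r]. Qed.

Definition cl (t : R) : I01 := exist _ (clampR t) (clampR_in t).

Lemma cl_ext g t : g (cl t) = ext g t.
Proof.
  rewrite ext_proj. simpl. unfold clampR.
  destruct (Rle_dec t 0).
  - rewrite Rmin_left, Rmax_left by lra. symmetry. apply ext_left. lra.
  - destruct (Rle_dec t 1).
    + rewrite Rmin_left, Rmax_right by lra. reflexivity.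
    + rewrite Rmin_right, Rmax_right by lra. symmetry. apply ext_right. lra.
Qed.

(** * The curve t |-> (1 - cos t)/2 of I *)

(** [cos_shift n] is the n-th derivative of cos. *)
Definition cos_shift (n : nat) (t : R) : R := cos (t + INR n * (PI / 2)).

Lemma cos_shift_deriv n t :
  derivable_pt_lim (cos_shift n) t (cos_shift (S n) t).
Proof.
  unfold cos_shift. rewrite S_INR.
  replace (cos (t + (INR n + 1) * (PI / 2))) with (- sin (t + INR n * (PI / 2)) * 1).
  2:{ replace (t + (INR n + 1) * (PI / 2)) with (t + INR n * (PI / 2) + PI / 2) by ring.
      rewrite cos_plus, cos_PI2, sin_PI2. ring. }
  apply (derivable_pt_lim_comp (fun t => t + INR n * (PI / 2)) cos);
    [|apply derivable_pt_lim_cos].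
  replace 1 with (1 + 0) by ring.
  apply (derivable_pt_lim_plus id (fct_cte _));
    [apply derivable_pt_lim_id|apply derivable_pt_lim_const].
Qed.

Definition cv (t : R) : R := (1 - cos t) / 2.

Lemma cv_in t : 0 <= cv t <= 1.
Proof. unfold cv. pose proof (COS_bound t). lra. Qed.

Definition cc (t : R) : I01 := exist _ (cv t) (cv_in t).

Lemma cc_curve : curve_I cc.
Proof.
  exists (fun n t => match n with
                     | O => cv t
                     | S m => - (1 / 2) * cos_shift (S m) t end).
  split; [reflexivity|].
  assert (Hd : forall n t, derivable_pt_lim (fun t => - (1 / 2) * cos_shift n t) t
                             (- (1 / 2) * cos_shift (S n) t))
    by (intros n t; apply (derivable_pt_lim_scal (cos_shift n)), cos_shift_deriv).
  intros [|m] t; [|apply Hd].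
  apply (derivable_pt_lim_locally_ext (fun t => 1 / 2 + - (1 / 2) * cos_shift 0 t)
           _ t (t - 1) (t + 1)); [lra| |].
  - intros z _. unfold cv, cos_shift. simpl. rewrite Rmult_0_l, Rplus_0_r. field.
  - replace (- (1 / 2) * cos_shift 1 t) with (0 + - (1 / 2) * cos_shift 1 t) by ring.
    apply (derivable_pt_lim_plus (fct_cte _)); [apply derivable_pt_lim_const|apply Hd].
Qed.

(** [cv] is positive on (0,PI), so the curve really leaves the endpoint 0. *)
Lemma cos_lt_1 t : 0 < t < PI -> cos t < 1.
Proof.
  intros H. pose proof (sin_gt_0 t (proj1 H) (proj2 H)).
  pose proof (sin2_cos2 t). pose proof (COS_bound t). unfold Rsqr in *. nra.
Qed.

Lemma ext_continuity_ends (g : I01 -> R) : F_I g ->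
  continuity_pt (ext g) 0 /\ continuity_pt (ext g) 1.
Proof.
  intros Hg.
  assert (CG : forall a, continuity_pt (fun t => ext g (cv t)) a).
  { intros a. apply smooth_continuity_pt.
    destruct (Hg cc cc_curve) as [d [Hd0 Hd]]. exists d. split; [|exact Hd].
    intros x. rewrite Hd0. apply ext_proj. }
  assert (Ccv : continuity cv) by (intros a; exact (smooth_continuity_pt cv a cc_curve)).
  assert (Hcv0 : cv 0 = 0) by (unfold cv; rewrite cos_0; field).
  assert (Hcvpos : forall t, 0 < t < PI -> 0 < cv t)
    by (intros t Ht; unfold cv; pose proof (cos_lt_1 t Ht); lra).
  assert (Cid : forall a, continuity_pt id a)
    by (intros a; apply derivable_continuous_pt, derivable_pt_id).
  assert (Cconst : forall k a, continuity_pt (fun _ => k) a)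
    by (intros k a; apply continuity_pt_const; intros u v; reflexivity).
  pose proof PI_RGT_0.
  split.
  - apply (continuity_along_curve _ cv PI); auto.
    intros x Hx. apply ext_left, Hx.
  - (* reflect: x |-> 1 - x maps the curve cv to t |-> cv (t + PI) *)
    set (F1 := fun x => ext g (1 - x)).
    assert (CF1 : continuity_pt F1 0).
    { apply (continuity_along_curve _ cv PI); auto.
      - apply (continuity_pt_locally_ext (comp (fun t => ext g (cv t)) (fun t => t + PI))
                 _ 1 0); [lra| |].
        + intros y _. unfold comp, F1, cv. rewrite neg_cos. f_equal. field.
        + apply continuity_pt_comp; [|apply CG].
          apply continuity_pt_plus; [apply Cid|apply Cconst].
      - intros x Hx. unfold F1. rewrite Rminus_0_r. apply ext_right. lra. }
    apply (continuity_pt_locally_ext (comp F1 (fun x => 1 - x)) _ 1 1); [lra| |].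
    + intros y _. unfold comp, F1. f_equal. ring.
    + apply continuity_pt_comp.
      * apply continuity_pt_minus; [apply Cconst|apply Cid].
      * replace (1 - 1) with 0 by ring. exact CF1.
Qed.

(** * Generating functions extend smoothly to R *)

Section ZeroExtension.

Variable g : I01 -> R.
Variable dg : nat -> R -> R.
Hypothesis g_F_I : F_I g.
Hypothesis dg_0 : forall t, open01 t -> dg 0%nat t = ext g t.
Hypothesis dg_deriv : forall n t, open01 t -> derivable_pt_lim (dg n) t (dg (S n) t).
Hypothesis dg_flat : forall n, (1 <= n)%nat ->
  limit1_in (dg n) open01 0 0 /\ limit1_in (dg n) open01 0 1.

(** The derivatives of [ext g]: those of [g] on (0,1), and 0 elsewhere. *)
Definition zext (n : nat) (x : R) : R :=
  match n with
  | O => ext g x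
  | S m => if Rlt_dec 0 x then if Rlt_dec x 1 then dg (S m) x else 0 else 0
  end.

Lemma zext_open n x : open01 x -> zext n x = dg n x.
Proof.
  intros [H0 H1]. destruct n as [|m]; simpl.
  - symmetry. apply dg_0. split; assumption.
  - destruct (Rlt_dec 0 x); [|lra]. destruct (Rlt_dec x 1); [reflexivity|lra].
Qed.

Lemma zext_out m x : ~ open01 x -> zext (S m) x = 0.
Proof.
  intros Hx. simpl. destruct (Rlt_dec 0 x); [|reflexivity].
  destruct (Rlt_dec x 1); [|reflexivity]. exfalso. apply Hx. split; assumption.
Qed.

Lemma zext_const_outside n :
  (forall x, x <= 0 -> zext n x = zext n 0) /\
  (forall x, 1 <= x -> zext n x = zext n 1).
Proof.
  destruct n as [|m].
  - split; [apply ext_left|apply ext_right].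
  - split; intros x Hx; rewrite !zext_out; unfold open01; lra.
Qed.

Lemma zext_deriv_off_ends n x : x <> 0 -> x <> 1 ->
  derivable_pt_lim (zext n) x (zext (S n) x).
Proof.
  intros Hx0 Hx1. destruct (zext_const_outside n) as [Hl Hr].
  destruct (Rlt_or_le x 0) as [Hneg|Hnn];
    [|destruct (Rlt_or_le 1 x) as [Hgt|Hle]].
  - rewrite zext_out by (unfold open01; lra).
    apply (derivable_pt_lim_locally_ext (fct_cte (zext n 0)) _ x (x - 1) 0);
      [lra| |apply derivable_pt_lim_const].
    intros z Hz. symmetry. apply Hl. lra.
  - rewrite zext_out by (unfold open01; lra).
    apply (derivable_pt_lim_locally_ext (fct_cte (zext n 1)) _ x 1 (x + 1));
      [lra| |apply derivable_pt_lim_const].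
    intros z Hz. symmetry. apply Hr. lra.
  - assert (Ho : open01 x) by (unfold open01; lra).
    rewrite (zext_open (S n) x Ho).
    apply (derivable_pt_lim_locally_ext (dg n) _ x 0 1); [exact Ho| |apply dg_deriv, Ho].
    intros z Hz. symmetry. apply zext_open, Hz.
Qed.

Lemma zext_small_near_ends m a : a = 0 \/ a = 1 ->
  forall eps, 0 < eps -> exists eta, 0 < eta /\
    forall x, Rabs (x - a) < eta -> Rabs (zext (S m) x) < eps.
Proof.
  intros Ha eps Heps.
  assert (Hl : limit1_in (dg (S m)) open01 0 a)
    by (destruct (dg_flat (S m)) as [H0 H1]; [apply le_n_S, le_0_n|];
        destruct Ha as [->| ->]; assumption).
  destruct (Hl eps Heps) as [alpha [Halpha Hx]].
  exists alpha. split; [lra|]. intros x Hxa.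
  destruct (Rlt_dec 0 x) as [p|p]; [destruct (Rlt_dec x 1) as [q|q]|].
  - rewrite zext_open by (split; assumption).
    specialize (Hx x (conj (conj p q) Hxa)). simpl in Hx. unfold R_dist in Hx.
    rewrite Rminus_0_r in Hx. exact Hx.
  - rewrite zext_out by (intros [_ h]; contradiction). rewrite Rabs_R0. lra.
  - rewrite zext_out by (intros [h _]; contradiction). rewrite Rabs_R0. lra.
Qed.

Lemma zext_continuity_ends n a : a = 0 \/ a = 1 -> continuity_pt (zext n) a.
Proof.
  intros Ha. destruct n as [|m].
  - destruct (ext_continuity_ends g g_F_I). destruct Ha as [->| ->]; assumption.
  - intros eps Heps. destruct (zext_small_near_ends m a Ha eps Heps) as [eta [Heta Hx]].
    exists eta. split; [exact Heta|]. intros x [_ Hxa].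
    change (Rabs (x - a) < eta) in Hxa. change (Rabs (zext (S m) x - zext (S m) a) < eps).
    rewrite (zext_out m a), Rminus_0_r by (unfold open01; lra).
    apply Hx, Hxa.
Qed.

(** At the endpoints, flatness makes [zext (S n)] (which is 0 there) the
    derivative of [zext n]. *)
Lemma zext_deriv_ends n a : a = 0 \/ a = 1 ->
  derivable_pt_lim (zext n) a (zext (S n) a).
Proof.
  intros Ha. rewrite zext_out by (unfold open01; lra).
  apply (flat_point_derivative (zext n) (zext (S n)) a 1);
    [lra|apply zext_continuity_ends, Ha| |].
  - intros y [Hy0 Hy1]. apply zext_deriv_off_ends; intros ->;
      destruct Ha as [-> | ->];
      rewrite ?Rminus_0_r, ?Rminus_0_l, ?Rminus_diag, ?Rabs_Ropp, ?Rabs_R0, ?Rabs_R1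
        in Hy0, Hy1; lra.
  - intros eps Heps. destruct (zext_small_near_ends n a Ha eps Heps) as [eta [Heta Hx]].
    exists eta. split; [exact Heta|]. intros y [_ Hy]. apply Hx, Hy.
Qed.

Lemma zext_deriv n x : derivable_pt_lim (zext n) x (zext (S n) x).
Proof.
  destruct (Req_dec x 0) as [->|Hx0]; [apply zext_deriv_ends; left; reflexivity|].
  destruct (Req_dec x 1) as [->|Hx1]; [apply zext_deriv_ends; right; reflexivity|].
  apply zext_deriv_off_ends; assumption.
Qed.

End ZeroExtension.

Lemma F_gen_smooth_ext g : F_gen g -> smooth (ext g).
Proof.
  intros [HI [dg [H0 [H1 H2]]]].
  exists (zext g dg). split; [reflexivity|].
  intros n x. apply zext_deriv; assumption.
Qed.

Lemma cl_curve_II : curve_II cl.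
Proof.
  intros g Hg. destruct (F_gen_smooth_ext g Hg) as [d [Hd0 Hd]].
  exists d. split; [|exact Hd]. intros x. rewrite cl_ext. apply Hd0.
Qed.

(** * Structure functions of the flattened interval *)

(** If [ext f] is smooth, [f] is flat at both ends: the derivatives of [ext f]
    vanish off [0,1], where [ext f] is constant, so by continuity they tend
    to 0 at the endpoints. *)
Lemma smooth_ext_flat_ends f : smooth (ext f) -> flat_ends f.
Proof.
  intros [e [He0 He]]. exists e.
  split; [intros t _; apply He0|]. split; [intros n t _; apply He|].
  intros [|m] Hm; [inversion Hm|].
  assert (Ce : forall a, continuity_pt (e (S m)) a)
    by (intros a; exact (derivable_pt_lim_continuity _ _ _ (He (S m) a))).
  split; apply limit_zero_of_zeros; [apply Ce| |apply Ce|]; intros eps Heps.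
  - exists (- (eps / 2)). split; [rewrite Rminus_0_r, Rabs_left; lra|].
    apply (derivatives_vanish e (- eps) 0 (ext f 0)); [|exact He|lra].
    intros x Hx. rewrite He0. apply ext_left. lra.
  - exists (1 + eps / 2). split; [replace (1 + eps / 2 - 1) with (eps / 2) by ring;
                                  rewrite Rabs_right; lra|].
    apply (derivatives_vanish e 1 (1 + eps) (ext f 1)); [|exact He|lra].
    intros x Hx. rewrite He0. apply ext_right. lra.
Qed.

Theorem mainTheorem1 : forall f : I01 -> R, F_II f <-> F_gen f.
Proof.
  intros f. split.
  - intros Hf. split.
    + (* curves of I are curves of II, since F ⊆ F_I *)
      intros c Hc. apply Hf. intros g [Hg _]. exact (Hg c Hc).
    + apply smooth_ext_flat_ends.
      destruct (Hf cl cl_curve_II) as [d [Hd0 Hd]].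
      exists d. split; [|exact Hd]. intros x. rewrite Hd0. apply cl_ext.
  - intros Hf c Hc. exact (Hc f Hf).
Qed.
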